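(* Suppose $(\mu^{(k)},w^{(k)})$ is an exact minimizer of rQEPmin, let $y^{(k)}=(T_k-\mu^{(k)}I)w^{(k)}$ and $z^{(k)}=Q_kw^{(k)}$. Then the residual $r_k=(PAP-\mu^{(k)}I)^2z^{(k)}-\gamma^{-2}b_0b_0^{\top}z^{(k)}$ satisfies $r_k=\beta_{k+1}q_{k+1}e_k^{\top}y^{(k)}+\beta_{k+1}(PAP-\mu^{(k)}I)q_{k+1}e_k^{\top}w^{(k)}$, where $\beta_{k+1}q_{k+1}$ denotes $\widehat q_{k+1}$.
   Context: Let $A\in\mathbb{R}^{n\times n}$ be symmetric, $C\in\mathbb{R}^{n\times m}$ full column rank, $P=I-C(C^{\top}C)^{-1}C^{\top}$, $0\ne b_0\in\mathcal N(C^{\top})$, $\gamma>0$. Lanczos process with $M=PAP$: $q_0=0$, $\beta_1=\|b_0\|$, $q_1=b_0/\|b_0\|$, for $j=1,2,\dots$: $\alpha_j=q_j^{\top}Mq_j$, $\widehat q_{j+1}=Mq_j-\alpha_jq_j-\beta_jq_{j-1}$, $\beta_{j+1}=\|\widehat q_{j+1}\|$, $q_{j+1}=\widehat q_{j+1}/\beta_{j+1}$ when $\beta_{j+1}>0$; assume $\beta_j\ne0$ for $j=2,\dots,k$. $Q_k=[q_1,\dots,q_k]$, $T_k=Q_k^{\top}PAPQ_k$ (tridiagonal). rQEPmin: minimize $\lambda$ over $\lambda\in\mathbb{R}$, $0\ne w\in\mathbb{R}^k$ with $(T_k-\lambda I)^2w=\gamma^{-2}\|b_0\|^2e_1e_1^{\top}w$.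 *)

From HB Require Import structures.
From mathcomp Require Import all_boot all_order all_algebra.
Set Implicit Arguments. Unset Strict Implicit. Unset Printing Implicit Defensive.
Import Order.TTheory GRing.Theory Num.Theory.
Local Open Scope ring_scope.

Section Lanczos.
Variable R : rcfType.
Variable n : nat.

Definition vnorm (v : 'cV[R]_n) : R := Num.sqrt ((v^T *m v) 0 0).

Definition projP (m : nat) (C : 'M[R]_(n, m)) : 'M[R]_n :=
  1%:M - C *m invmx (C^T *m C) *m C^T.

(* Lanczos state at step j >= 1: (q_{j-1}, q_j, beta_j), for the matrix M,
   started from b0.  Convention: q_{j+1} := qhat_{j+1} / beta_{j+1}, which
   is 0 when beta_{j+1} = 0 (only used when beta_{j+1} <> 0). *)
Fixpoint lanczos_state (M : 'M[R]_n) (b0 : 'cV[R]_n) (j : nat)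
  : 'cV[R]_n * 'cV[R]_n * R :=
  match j with
  | 0%N => (0, 0, 0)
  | 1%N => (0, (vnorm b0)^-1 *: b0, vnorm b0)
  | j'.+1 =>
      let: (qp, q, b) := lanczos_state M b0 j' in
      let alpha := (q^T *m M *m q) 0 0 in
      let qh := M *m q - alpha *: q - b *: qp in
      let b' := vnorm qh in
      (q, b'^-1 *: qh, b')
  end.

Definition lq M b0 j : 'cV[R]_n := (lanczos_state M b0 j).1.2.
Definition lbeta M b0 j : R := (lanczos_state M b0 j).2.
Definition lalpha M b0 j : R := ((lq M b0 j)^T *m M *m lq M b0 j) 0 0.
Definition lqhat M b0 j : 'cV[R]_n :=
  M *m lq M b0 j - lalpha M b0 j *: lq M b0 j
    - lbeta M b0 j *: (lanczos_state M b0 j).1.1.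

Definition lQ M b0 k : 'M[R]_(n, k) := \matrix_(i < n, j < k) lq M b0 j.+1 i ord0.
End Lanczos.

(* i-th standard basis column vector of R^k (0-based index i) *)
Definition ecol (R : rcfType) (k i : nat) : 'cV[R]_k :=
  \col_(j < k) (nat_of_ord j == i)%:R.

(* feasibility for rQEPmin: (T - lam I)^2 w = gamma^-2 ||b0||^2 e1 e1^T w, w <> 0 *)
Definition rQEP_feasible (R : rcfType) (k : nat) (T : 'M[R]_k) (c : R)
  (lam : R) (w : 'cV[R]_k) : Prop :=
  w != 0 /\
  (T - lam%:M) *m (T - lam%:M) *m w = c *: (ecol R k 0 *m (ecol R k 0)^T *m w).

Definition rQEPmin_minimizer (R : rcfType) (k : nat) (T : 'M[R]_k) (c : R)
  (mu : R) (w : 'cV[R]_k) : Prop :=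
  rQEP_feasible T c mu w /\
  forall (lam : R) (w' : 'cV[R]_k), rQEP_feasible T c lam w' -> mu <= lam.

From HB Require Import structures.
From mathcomp Require Import all_boot all_order all_algebra.
Set Implicit Arguments. Unset Strict Implicit. Unset Printing Implicit Defensive.
Import Order.TTheory GRing.Theory Num.Theory.
Local Open Scope ring_scope.

(* Because PAP is symmetric, the three-term recurrence makes q_1, ..., q_k
   orthonormal and qhat_{k+1} orthogonal to them, which turns the recurrence
   into the matrix relation  PAP Q_k = Q_k T_k + qhat_{k+1} e_k^T.  Shifting by
   mu and applying it twice to w gives
     (PAP - mu)^2 Q_k w = Q_k (T_k - mu)^2 w + qhat_{k+1} e_k^T y
                          + (PAP - mu) qhat_{k+1} e_k^T w,
   and since b0 = |b0| Q_k e_1, the feasibility equation of (mu, w) turns the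
   first term into gamma^-2 b0 b0^T Q_k w. *)

Section DotProduct.
Variables (R : comPzRingType) (n : nat).
Implicit Types (u v w : 'cV[R]_n) (M : 'M[R]_n).

Definition dotv u v : R := (u^T *m v) 0 0.

Lemma dotvE u v : dotv u v = \sum_i u i 0 * v i 0.
Proof. by rewrite /dotv mxE; apply: eq_bigr => i _; rewrite mxE. Qed.

Lemma dotvC u v : dotv u v = dotv v u.
Proof. by rewrite !dotvE; apply: eq_bigr => i _; rewrite mulrC. Qed.

Lemma dotv0r u : dotv u 0 = 0.
Proof. by rewrite /dotv mulmx0 mxE. Qed.

Lemma dotvDr u v w : dotv u (v + w) = dotv u v + dotv u w.
Proof. by rewrite /dotv mulmxDr mxE. Qed.

Lemma dotvBr u v w : dotv u (v - w) = dotv u v - dotv u w.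
Proof. by rewrite /dotv mulmxBr !mxE. Qed.

Lemma dotvZr u v a : dotv u (a *: v) = a * dotv u v.
Proof. by rewrite /dotv -scalemxAr mxE. Qed.

Lemma dotv0l u : dotv 0 u = 0.
Proof. by rewrite dotvC dotv0r. Qed.

Lemma dotvDl u v w : dotv (v + w) u = dotv v u + dotv w u.
Proof. by rewrite dotvC dotvDr !(dotvC u). Qed.

Lemma dotvZl u v a : dotv (a *: v) u = a * dotv v u.
Proof. by rewrite dotvC dotvZr dotvC. Qed.

Lemma dotv_mulmx_sym M u v : M^T = M -> dotv (M *m u) v = dotv u (M *m v).
Proof. by move=> M_sym; rewrite /dotv trmx_mul M_sym mulmxA. Qed.

End DotProduct.

Lemma dotv_eq0 (R : realDomainType) n (u : 'cV[R]_n) : (dotv u u == 0) = (u == 0).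
Proof.
apply/idP/eqP => [|->]; last by rewrite dotv0r.
rewrite dotvE psumr_eq0 => [/allP u0|i _]; last by rewrite -expr2 sqr_ge0.
apply/matrixP => i j; rewrite (ord1 j) mxE.
by have := u0 i (mem_index_enum i); rewrite -expr2 sqrf_eq0 => /eqP.
Qed.

Lemma vnorm_sqr (R : rcfType) n (u : 'cV[R]_n) : vnorm u ^+ 2 = dotv u u.
Proof.
rewrite sqr_sqrtr // -[_ 0 0]/(dotv u u) dotvE.
by apply: sumr_ge0 => i _; rewrite -expr2 sqr_ge0.
Qed.

Lemma vnorm_eq0 (R : rcfType) n (u : 'cV[R]_n) : (vnorm u == 0) = (u == 0).
Proof. by rewrite -dotv_eq0 -vnorm_sqr sqrf_eq0. Qed.

Lemma dotv_normalize (R : rcfType) n (u : 'cV[R]_n) : vnorm u != 0 ->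
  dotv ((vnorm u)^-1 *: u) ((vnorm u)^-1 *: u) = 1.
Proof.
move=> u0; rewrite dotvZl dotvZr -vnorm_sqr mulrA -expr2 -exprMn mulVf //.
by rewrite expr1n.
Qed.

Section LanczosRecurrence.
Variables (R : rcfType) (n : nat) (M : 'M[R]_n) (b0 : 'cV[R]_n).

Local Notation q := (lq M b0).
Local Notation alpha := (lalpha M b0).
Local Notation beta := (lbeta M b0).
Local Notation qhat := (lqhat M b0).

Lemma lanczos_stateS j : (0 < j)%N ->
  lanczos_state M b0 j.+1 = (q j, (vnorm (qhat j))^-1 *: qhat j, vnorm (qhat j)).
Proof.
case: j => [//|j] _; rewrite /lqhat /lalpha /lbeta /lq.
change (lanczos_state M b0 j.+2) with
  (let: (qp, q, b) := lanczos_state M b0 j.+1 in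
   let qh := M *m q - (q^T *m M *m q) 0 0 *: q - b *: qp in
   (q, (vnorm qh)^-1 *: qh, vnorm qh)).
by case: (lanczos_state M b0 j.+1) => [[qp q'] b].
Qed.

Lemma lq0 : q 0 = 0. Proof. by []. Qed.

Lemma lq1 : q 1 = (vnorm b0)^-1 *: b0. Proof. by []. Qed.

Lemma lbetaS j : (0 < j)%N -> beta j.+1 = vnorm (qhat j).
Proof. by move=> j_gt0; rewrite /lbeta lanczos_stateS. Qed.

Lemma lqS j : (0 < j)%N -> q j.+1 = (beta j.+1)^-1 *: qhat j.
Proof. by move=> j_gt0; rewrite /lq /lbeta lanczos_stateS. Qed.

Lemma lqhatE j : (0 < j)%N ->
  qhat j = M *m q j - alpha j *: q j - beta j *: q j.-1.
Proof. by case: j => [|[|j]] //= _; rewrite /lqhat lanczos_stateS. Qed.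

Lemma lqhat_lbeta j : (0 < j)%N -> beta j.+1 != 0 ->
  qhat j = beta j.+1 *: q j.+1.
Proof. by move=> j_gt0 bj; rewrite lqS // scalerA mulfV // scale1r. Qed.

Lemma mulmx_lq j : (0 < j)%N ->
  M *m q j = qhat j + alpha j *: q j + beta j *: q j.-1.
Proof. by move=> j_gt0; rewrite lqhatE // -addrA [_ *: q j + _]addrC addrA !subrK. Qed.

Lemma lalpha_dotv j : alpha j = dotv (q j) (M *m q j).
Proof. by rewrite /lalpha /dotv mulmxA. Qed.

End LanczosRecurrence.

Section LanczosOrthonormality.
Variables (R : rcfType) (n : nat) (M : 'M[R]_n) (b0 : 'cV[R]_n).
Hypotheses (M_sym : M^T = M) (b0_neq0 : b0 != 0).

Local Notation q := (lq M b0).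
Local Notation beta := (lbeta M b0).
Local Notation qhat := (lqhat M b0).

(* The left index may be 0, since q_0 = 0 is orthogonal to every vector. *)
Definition lanczos_orthonormal j := forall i l, (i <= j)%N -> (0 < l <= j)%N ->
  dotv (q i) (q l) = (i == l)%:R.

Lemma dotv_lq_lqhat j : (0 < j)%N ->
    (forall l, (2 <= l <= j)%N -> beta l != 0) -> lanczos_orthonormal j ->
  forall i, (i <= j)%N -> dotv (q i) (qhat j) = 0.
Proof.
move=> j_gt0 beta_neq0 orth [|i] le_ij; first by rewrite lq0 dotv0l.
have prev : dotv (q i.+1) (q j.-1) = (j.-1 == i.+1)%:R.
  by rewrite dotvC orth ?leq_pred.
rewrite lqhatE // !dotvBr !dotvZr prev.
case: (ltngtP i.+1 j) le_ij => // [lt_ij | eq_ij] _; last first.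
  subst j; rewrite /= -lalpha_dotv orth ?leqnn //.
  by rewrite eqxx (ltn_eqF (ltnSn i)) mulr1 mulr0 subr0 subrr.
rewrite -dotv_mulmx_sym // mulmx_lq // lqhat_lbeta //; last by rewrite beta_neq0.
rewrite !dotvDl !dotvZl !orth ?leqnn ?(ltnW lt_ij) ?(ltnW (ltnW lt_ij)) ?j_gt0 //.
rewrite (ltn_eqF lt_ij) (ltn_eqF (ltnW lt_ij)) !mulr0 !addr0 subr0.
rewrite -[j.-1 == _]eqSS prednK // [j == _]eq_sym.
by case: eqP => [<-|_]; rewrite ?mulr0 subrr.
Qed.

Lemma lanczos_orthonormalP j :
  (forall l, (2 <= l <= j)%N -> beta l != 0) -> lanczos_orthonormal j.
Proof.
elim: j => [_ i [|l] //|j IH beta_neq0].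
have orth : lanczos_orthonormal j.
  by apply: IH => l /andP[l_ge2 l_le]; rewrite beta_neq0 // l_ge2 leqW.
have unit_last : dotv (q j.+1) (q j.+1) = 1.
  have := beta_neq0 j.+1; case: j {IH orth beta_neq0} => [_|j bj].
    by rewrite lq1 dotv_normalize // vnorm_eq0.
  by rewrite lqS // lbetaS // dotv_normalize // -lbetaS // bj //= leqnn.
have orth_last i : (i <= j)%N -> dotv (q i) (q j.+1) = 0.
  case: j {IH unit_last} beta_neq0 orth => [_ _|j beta_neq0 orth le_ij].
    by rewrite leqn0 => /eqP->; rewrite lq0 dotv0l.
  rewrite lqS // dotvZr dotv_lq_lqhat ?mulr0 // => l /andP[l_ge2 l_le].
  by rewrite beta_neq0 // l_ge2 leqW.
move=> i l; rewrite [(i <= _)%N]leq_eqVlt [(l <= _)%N]leq_eqVlt !ltnS.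
case/orP=> [/eqP-> | le_ij] /andP[l_gt0 /orP[/eqP-> | le_lj]].
- by rewrite eqxx.
- by rewrite dotvC orth_last // gtn_eqF.
- by rewrite orth_last // ltn_eqF.
- by apply: orth; rewrite ?l_gt0.
Qed.

End LanczosOrthonormality.

Lemma colspace_orthonormal_proj (F : fieldType) n k p
    (Q : 'M[F]_(n, k)) (B : 'M[F]_(n, p)) :
  Q^T *m Q = 1%:M -> (B^T <= Q^T)%MS -> Q *m (Q^T *m B) = B.
Proof.
move=> QtQ /submxP[D /(congr1 trmx)]; rewrite trmxK trmx_mul trmxK => ->.
by rewrite [Q^T *m _]mulmxA QtQ mul1mx.
Qed.

Lemma col_mul_trmx_ecol (R : rcfType) n k (u : 'cV[R]_n) i (j : 'I_k) :
  col j (u *m (ecol R k i)^T) = (j == i :> nat)%:R *: u.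
Proof.
by apply/matrixP => r c; rewrite !mxE big_ord1 !mxE (ord1 c) mulrC.
Qed.

Section LanczosMatrix.
Variables (R : rcfType) (n : nat) (M : 'M[R]_n) (b0 : 'cV[R]_n) (k : nat).

Local Notation q := (lq M b0).
Local Notation beta := (lbeta M b0).
Local Notation qhat := (lqhat M b0).
Local Notation Q := (lQ M b0 k).

Hypothesis beta_neq0 : forall l, (2 <= l <= k)%N -> beta l != 0.

Lemma col_lQ (j : 'I_k) : col j Q = q j.+1.
Proof. by apply/matrixP => r c; rewrite !mxE (ord1 c). Qed.

Lemma lQ_ecol (j : 'I_k) : Q *m ecol R k j = q j.+1.
Proof.
rewrite -col_lQ colE; congr (_ *m _).
by apply/matrixP => r c; rewrite !mxE (ord1 c) eqxx andbT.
Qed.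

Lemma trmx_lQ_mulmxE p (B : 'M[R]_(n, p)) i j :
  (Q^T *m B) i j = dotv (q i.+1) (col j B).
Proof. by rewrite dotvE !mxE; apply: eq_bigr => r _; rewrite !mxE. Qed.

Lemma lq_sub_lQ i : (i <= k)%N -> ((q i)^T <= Q^T)%MS.
Proof.
case: i => [_|i lt_ik]; first by rewrite lq0 trmx0 sub0mx.
by rewrite -(col_lQ (Ordinal lt_ik)) tr_col row_sub.
Qed.

Lemma scaled_lq_sub_lQ i c : (i <= k)%N -> ((c *: q i)^T <= Q^T)%MS.
Proof. by move=> le_ik; rewrite linearZ scalemx_sub ?lq_sub_lQ. Qed.

Lemma mulmx_lq_sub j : (0 < j <= k)%N ->
  ((M *m q j - (j == k)%B%:R *: qhat k)^T <= Q^T)%MS.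
Proof.
case/andP=> j_gt0 le_jk; rewrite mulmx_lq //.
have le_pred_k : (j.-1 <= k)%N by rewrite (leq_trans (leq_pred j)).
have [->|neq_jk] := eqVneq j k.
  rewrite scale1r -[qhat k + _ + _]addrA addrC addrK linearD /=.
  by apply: addmx_sub; apply: scaled_lq_sub_lQ; rewrite ?leq_pred.
have lt_jk : (j < k)%N by rewrite ltn_neqAle neq_jk.
have bj : beta j.+1 != 0 by rewrite beta_neq0 // ltnS j_gt0.
rewrite scale0r subr0 lqhat_lbeta // !linearD /=.
by do 2?apply: addmx_sub; apply: scaled_lq_sub_lQ; rewrite // ltnW.
Qed.

Hypotheses (M_sym : M^T = M) (b0_neq0 : b0 != 0).

Lemma lQ_orthonormal : Q^T *m Q = 1%:M.
Proof.
have orth := lanczos_orthonormalP M_sym b0_neq0 beta_neq0.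
apply/matrixP => i l.
by rewrite trmx_lQ_mulmxE col_lQ orth ?ltn_ord // mxE eqSS.
Qed.

Lemma trmx_lQ_lqhat : (0 < k)%N -> Q^T *m qhat k = 0.
Proof.
move=> k_gt0; apply/matrixP => i c.
rewrite trmx_lQ_mulmxE col_id (dotv_lq_lqhat M_sym) ?ltn_ord ?mxE //.
exact: lanczos_orthonormalP.
Qed.

Lemma trmx_b0_lQ : (0 < k)%N -> b0^T *m Q = vnorm b0 *: (ecol R k 0)^T.
Proof.
move=> k_gt0; have b0E : b0 = vnorm b0 *: (Q *m ecol R k 0).
  by rewrite (lQ_ecol (Ordinal k_gt0)) lq1 scalerA mulfV ?scale1r // vnorm_eq0.
by rewrite {1}b0E linearZ /= trmx_mul -scalemxAl -mulmxA lQ_orthonormal mulmx1.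
Qed.

Lemma lanczos_relation : (0 < k)%N ->
  M *m Q = Q *m (Q^T *m M *m Q) + qhat k *m (ecol R k k.-1)^T.
Proof.
move=> k_gt0; set B := M *m Q - qhat k *m (ecol R k k.-1)^T.
have B_sub : (B^T <= Q^T)%MS.
  apply/row_subP => j; rewrite -tr_col raddfB /= col_mul_trmx_ecol.
  rewrite colE -mulmxA -colE col_lQ -eqSS prednK //.
  by apply: mulmx_lq_sub; rewrite /= ltn_ord.
have QtB : Q^T *m B = Q^T *m M *m Q.
  by rewrite /B mulmxBr !mulmxA trmx_lQ_lqhat // mul0mx subr0.
have := colspace_orthonormal_proj lQ_orthonormal B_sub.
by rewrite QtB => ->; rewrite /B subrK.
Qed.

End LanczosMatrix.

Lemma projP_sym (R : rcfType) n m (C : 'M[R]_(n, m)) : (projP C)^T = projP C.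
Proof.
rewrite /projP raddfB /= trmx1 !trmx_mul trmxK trmx_inv trmx_mul trmxK.
by rewrite mulmxA.
Qed.

Lemma krylov_decomposition_shift (R : comPzRingType) n k (X : 'M[R]_n) (Q : 'M[R]_(n, k))
    (S : 'M[R]_k) (u : 'cV[R]_n) (e : 'cV[R]_k) mu :
  X *m Q = Q *m S + u *m e^T -> (X - mu%:M) *m Q = Q *m (S - mu%:M) + u *m e^T.
Proof.
by move=> XQ; rewrite mulmxBl XQ mulmxBr mul_scalar_mx mul_mx_scalar addrAC.
Qed.

Lemma krylov_decomposition_sqr (R : pzRingType) n k (X : 'M[R]_n) (Q : 'M[R]_(n, k))
    (S : 'M[R]_k) (u : 'cV[R]_n) (e w : 'cV[R]_k) :
    X *m Q = Q *m S + u *m e^T ->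
  X *m X *m (Q *m w) =
    Q *m (S *m S *m w) + u *m (e^T *m (S *m w)) + X *m u *m (e^T *m w).
Proof.
move=> XQ; rewrite -mulmxA (mulmxA X Q w) XQ mulmxDl mulmxDr -(mulmxA Q S w).
by rewrite (mulmxA X Q) XQ mulmxDl -!mulmxA.
Qed.

Unset Implicit Arguments.

Theorem proposition3p2 (R : rcfType) (n m k : nat)
  (A : 'M[R]_n) (C : 'M[R]_(n, m)) (b0 : 'cV[R]_n) (gamma : R)
  (hA : A^T = A) (hC : \rank C = m)
  (hb0 : b0 != 0) (hb0C : C^T *m b0 = 0) (hgamma : 0 < gamma)
  (hk : (0 < k)%N)
  (hbeta : forall j : nat, (2 <= j <= k)%N ->
     lbeta (projP C *m A *m projP C) b0 j != 0)
  (mu : R) (w : 'cV[R]_k) :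
  let M := projP C *m A *m projP C in
  let Q := lQ M b0 k in
  let T := Q^T *m M *m Q in
  rQEPmin_minimizer T (gamma ^- 2 * vnorm b0 ^+ 2) mu w ->
  let y := (T - mu%:M) *m w in
  let z := Q *m w in
  let ek := ecol R k k.-1 in
  (M - mu%:M) *m (M - mu%:M) *m z - gamma ^- 2 *: (b0 *m b0^T *m z)
  = lqhat M b0 k *m (ek^T *m y) + (M - mu%:M) *m lqhat M b0 k *m (ek^T *m w).
Proof.
move=> M Q T [[_ feasible] _] y z ek.
have M_sym : M^T = M by rewrite /M !trmx_mul projP_sym hA mulmxA.
have shifted := krylov_decomposition_shift mu (lanczos_relation hbeta M_sym hb0 hk).
rewrite /z (krylov_decomposition_sqr _ shifted) feasible.
suff -> : Q *m (gamma ^- 2 * vnorm b0 ^+ 2 *: (ecol R k 0 *m (ecol R k 0)^T *m w))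
          = gamma ^- 2 *: (b0 *m b0^T *m (Q *m w)).
  by rewrite addrAC [_ + _ - _]addrAC subrr add0r.
have b0_neq0 : vnorm b0 != 0 by rewrite vnorm_eq0.
rewrite -scalemxAr !mulmxA (lQ_ecol _ _ (Ordinal hk)) lq1 -[b0 *m _ *m Q]mulmxA.
rewrite trmx_b0_lQ // -scalemxAr -!scalemxAl !scalerA.
by congr (_ *: _); rewrite -mulrA expr2 mulfK.
Qed.
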